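(* Let $(\varphi_\alpha)_{\alpha>0}$ be a non-linear regularizing filter and fix $\alpha>0$. Then $\operatorname{ran}(\mathbf{M}_\kappa^+\circ\Phi_{\alpha,\kappa})\subseteq\operatorname{dom}(\mathcal{R}_\alpha)$, and moreover $\operatorname{ran}(\mathbf{M}_\kappa^+\circ\Phi_{\alpha,\kappa})\subseteq\operatorname{dom}(\partial\mathcal{R}_\alpha)$.
   Context: $\Lambda$ is an at most countable index set and $\kappa=(\kappa_\lambda)_{\lambda\in\Lambda}\in(0,\infty)^\Lambda$ with $\sup_\lambda\kappa_\lambda<\infty$. $\mathbf{M}_\kappa\colon\ell^2(\Lambda)\to\ell^2(\Lambda)$, $(x_\lambda)\mapsto(\kappa_\lambda x_\lambda)$; $\mathbf{M}_\kappa^+$ is its Moore–Penrose inverse, with domain $\{(c_\lambda)\in\ell^2:(c_\lambda/\kappa_\lambda)\in\ell^2\}$ and $\mathbf{M}_\kappa^+((c_\lambda))=(c_\lambda/\kappa_\lambda)$. A non-linear regularizing filter is a family $(\varphi_\alpha)_{\alpha>0}$ of functions $\varphi_\alpha\colon(0,\infty)\times\mathbb{R}\to\mathbb{R}$ such that for all $\alpha,\kappa>0$: (F1) $\varphi_\alpha(\kappa,\cdot)$ is non-decreasing; (F2) $\varphi_\alpha(\kappa,\cdot)$ is 1-Lipschitz; (F3) $\varphi_\alpha(\kappa,0)=0$; (F4) $\lim_{\alpha\to0}\varphi_\alpha(\kappa,c)=c$ for all $c\in\mathbb{R}$. $\Phi_{\alpha,\kappa}((c_\lambda))=(\varphi_\alpha(\kappa_\lambda,c_\lambda))_\lambda$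 on $\ell^2(\Lambda)$; $\operatorname{dom}(\mathbf{M}_\kappa^+\circ\Phi_{\alpha,\kappa})=\{z:\Phi_{\alpha,\kappa}(z)\in\operatorname{dom}(\mathbf{M}_\kappa^+)\}$. $\kappa$-regularizer: for each $\alpha>0,\lambda\in\Lambda$ let $s_{\alpha,\lambda}\colon\mathbb{R}\to\mathbb{R}\cup\{\infty\}$ be proper, convex, lower semi-continuous with $s_{\alpha,\lambda}\ge s_{\alpha,\lambda}(0)=0$ and $\varphi_\alpha(\kappa_\lambda,\cdot)=\operatorname{prox}_{s_{\alpha,\lambda}}$ (such functions exist); then $\mathcal{R}_\alpha((x_\lambda)_\lambda):=\sum_{\lambda}s_{\alpha,\lambda}(\kappa_\lambda x_\lambda)$ on $\ell^2(\Lambda)$. Here $\operatorname{prox}_f(x)=\operatorname{argmin}_y\tfrac12|x-y|^2+f(y)$, $\operatorname{dom}(\mathcal{R})=\{x:\mathcal{R}(x)<\infty\}$ and $\partial$ denotes the convex subdifferential. *)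

From HB Require Import structures.
From mathcomp Require Import all_boot all_order all_algebra.
From mathcomp Require Import all_classical all_reals all_analysis.
Set Implicit Arguments. Unset Strict Implicit. Unset Printing Implicit Defensive.
Import Order.TTheory GRing.Theory Num.Theory.
Import numFieldNormedType.Exports.
Local Open Scope classical_set_scope.
Local Open Scope ring_scope.

(* Sequences indexed by an at most countable index set Lambda (a countType,
   possibly finite) are functions Lambda -> R.  *)

Definition l2 {R : realType} {L : countType} (x : L -> R) : Prop :=
  (\esum_(i in [set: L]) ((x i) ^+ 2)%:E < +oo)%E.

(* inner product on l^2(Lambda): sum of the absolutely summable family
   (u_i v_i)_i, written as (sum of positive parts) - (sum of negative parts) *)
Definition l2_inner {R : realType} {L : countType} (u v : L -> R) : R :=
  fine (\esum_(i in [set: L]) (Num.max (u i * v i) 0)%:E)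
  - fine (\esum_(i in [set: L]) (Num.max (- (u i * v i)) 0)%:E).

Definition nonlinear_reg_filter {R : realType} (phi : R -> R -> R -> R) : Prop :=
  forall alpha kappa : R, 0 < alpha -> 0 < kappa ->
    [/\ {homo phi alpha kappa : a b / a <= b},
        (forall a b, `|phi alpha kappa a - phi alpha kappa b| <= `|a - b|),
        phi alpha kappa 0 = 0 &
        (forall c, phi a kappa c @[a --> 0^'+] --> c)].

Definition econvex {R : realType} (f : R -> \bar R) : Prop :=
  forall (x y t : R), (0 < t < 1)%R ->
    (f (t * x + (1 - t) * y)%R <= t%:E * f x + (1 - t)%R%:E * f y)%E.

Definition eproper {R : realType} (f : R -> \bar R) : Prop :=
  (forall x, f x != -oo%E) /\ exists x, f x != +oo%E.

Definition is_prox {R : realType} (f : R -> \bar R) (g : R -> R) : Prop :=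
  forall x y, ((2^-1 * (x - g x) ^+ 2)%R%:E + f (g x)
               <= (2^-1 * (x - y) ^+ 2)%R%:E + f y)%E.

Definition kappa_reg_family {R : realType} {L : countType}
  (phi : R -> R -> R -> R) (kappa : L -> R) (s : R -> L -> R -> \bar R) : Prop :=
  forall alpha (l : L), 0 < alpha ->
    [/\ eproper (s alpha l), econvex (s alpha l),
        lower_semicontinuous (s alpha l),
        ((forall x, (s alpha l 0%R <= s alpha l x)%E) /\ s alpha l 0%R = 0%E) &
        is_prox (s alpha l) (phi alpha (kappa l))].

Definition kappa_regularizer {R : realType} {L : countType}
  (kappa : L -> R) (s : R -> L -> R -> \bar R) (alpha : R) (x : L -> R) : \bar R :=
  \esum_(l in [set: L]) s alpha l (kappa l * x l).

Definition in_dom {R : realType} {L : countType} (Rc : (L -> R) -> \bar R)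
  (x : L -> R) : Prop := l2 x /\ (Rc x < +oo)%E.

Definition in_subdiff {R : realType} {L : countType} (Rc : (L -> R) -> \bar R)
  (x v : L -> R) : Prop :=
  l2 v /\ forall y, l2 y -> (Rc x + (l2_inner v (fun l => y l - x l))%:E <= Rc y)%E.

Definition in_dom_subdiff {R : realType} {L : countType} (Rc : (L -> R) -> \bar R)
  (x : L -> R) : Prop := l2 x /\ exists v, in_subdiff Rc x v.

Definition Phi {R : realType} {L : countType} (phi : R -> R -> R -> R)
  (alpha : R) (kappa : L -> R) (z : L -> R) : L -> R :=
  fun l => phi alpha (kappa l) (z l).
Definition Mplus {R : realType} {L : countType} (kappa : L -> R) (c : L -> R) : L -> R :=
  fun l => c l / kappa l.
Definition in_dom_Mplus {R : realType} {L : countType} (kappa : L -> R) (c : L -> R) : Prop :=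
  l2 c /\ l2 (Mplus kappa c).

Definition in_ran_MPhi {R : realType} {L : countType} (phi : R -> R -> R -> R)
  (alpha : R) (kappa : L -> R) (x : L -> R) : Prop :=
  exists z, l2 z /\ in_dom_Mplus kappa (Phi phi alpha kappa z)
            /\ x = Mplus kappa (Phi phi alpha kappa z).

From mathcomp Require Import all_boot all_order all_algebra.
From mathcomp Require Import all_classical all_reals all_analysis.
From mathcomp Require Import ring lra.
Import Order.TTheory GRing.Theory Num.Theory.
Local Open Scope classical_set_scope.
Local Open Scope ring_scope.

(* Write x = M_kappa^+ Phi(z) and p_l = kappa_l x_l = prox_{s_l}(z_l).  Testing the
   prox minimality at 0 gives s_l(p_l) <= z_l^2 / 2 and (z_l - p_l)^2 <= z_l^2, so
   R_alpha(x) <= |z|^2 < oo.  Testing it along the segment from p_l to any w and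
   letting the step go to 0 shows that z_l - p_l is a subgradient of s_l at p_l;
   summing over l, the l^2 sequence v_l = kappa_l (z_l - p_l) is a subgradient of
   R_alpha at x, square summable because kappa is bounded. *)

Section prox_scalar.
Context {R : realType} {f : R -> \bar R} {g : R -> R}.
Hypotheses (f0 : f 0 = 0%E) (f_ge0 : forall x, (f 0 <= f x)%E) (g_prox : is_prox f g).

Lemma prox_value_bound z : exists r, [/\ f (g z) = r%:E, 0 <= r &
  2^-1 * (z - g z) ^+ 2 + r <= 2^-1 * z ^+ 2].
Proof.
have := g_prox z 0; rewrite f0 adde0 subr0.
by have := f_ge0 (g z); rewrite f0; case: (f (g z)) => [r| |] //= r0; exists r.
Qed.

Lemma prox_value_le_sqr z : (f (g z) <= (z ^+ 2)%:E)%E.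
Proof.
have [r [-> r0 bnd]] := prox_value_bound z; rewrite lee_fin.
by have := sqr_ge0 (z - g z); have := sqr_ge0 z; lra.
Qed.

Lemma prox_residual_le_sqr z : (z - g z) ^+ 2 <= z ^+ 2.
Proof. by have [r [_ r0 bnd]] := prox_value_bound z; lra. Qed.

Hypothesis f_convex : econvex f.

(* Compare g z with y = t w + (1 - t) g z: minimality at y and convexity along the
   segment leave a gap of order t in the subgradient inequality. *)
Lemma prox_segment_gap z w r q t : f (g z) = r%:E -> f w = q%:E -> 0 < t < 1 ->
  r + (z - g z) * (w - g z) - q <= t * (2^-1 * (w - g z) ^+ 2).
Proof.
move=> fgz fw /andP[t0 t1]; set p := g z; set d := w - p.
set y := t * w + (1 - t) * p.
have conv_y : (f y <= t%:E * q%:E + (1 - t)%:E * r%:E)%E.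
  by rewrite -fw -fgz; apply: f_convex; rewrite t0 t1.
have := f_ge0 y; rewrite f0.
case Efy: (f y) => [fy| |] //= _; last first.
  by move: conv_y; rewrite Efy -!EFinM -EFinD leye_eq.
move: conv_y; rewrite Efy -!EFinM -EFinD lee_fin => conv_y.
have := g_prox z y; rewrite fgz Efy -!EFinD lee_fin -/p => min_y.
have zy : z - y = (z - p) - t * d by rewrite /y /d; ring.
rewrite zy in min_y.
rewrite -(ler_pM2l t0); nra.
Qed.

Lemma prox_subgradient z w : (f (g z) + ((z - g z) * (w - g z))%:E <= f w)%E.
Proof.
have [r [fgz r0 _]] := prox_value_bound z; rewrite fgz.
have := f_ge0 w; rewrite f0; case Efw: (f w) => [q| |] //= q0; last by rewrite leey.
rewrite -EFinD lee_fin; apply/ler_addgt0Pr => e e0.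
set c := 2^-1 * (w - g z) ^+ 2 + 1.
have c0 : 0 < c by rewrite /c; have := sqr_ge0 (w - g z); lra.
set t := Num.min (e / c) (2^-1).
have t0 : 0 < t by rewrite lt_min divr_gt0 //= invr_gt0 ltr0n.
have t1 : t < 1 by rewrite gt_min; apply/orP; right; lra.
have tc : t * c <= e by rewrite -ler_pdivlMr // ge_min lexx.
have := prox_segment_gap z w r q t fgz Efw; rewrite t0 t1 => /(_ isT) gap.
have : t * (2^-1 * (w - g z) ^+ 2) <= t * c by rewrite ler_pM2l // /c lerDl.
lra.
Qed.

End prox_scalar.

Section summable.
Context {R : realType} {L : countType}.
Implicit Types a b : L -> R.

Lemma esum_natmul_fin a n : (forall l, 0 <= a l) ->
  (\esum_(l in [set: L]) (a l)%:E < +oo)%E ->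
  (\esum_(l in [set: L]) (n%:R * a l)%:E < +oo)%E.
Proof.
move=> a0 a_fin; elim: n => [|n IH].
  by rewrite esum1 // => l _; rewrite mul0r.
rewrite (eq_esum (b := fun l => (n%:R * a l)%:E + (a l)%:E)); last first.
  by move=> l _; rewrite -EFinD mulrSr mulrDl mul1r.
rewrite esumD; first exact: lte_add_pinfty.
  by move=> l _; rewrite lee_fin mulr_ge0.
by move=> l _; rewrite lee_fin.
Qed.

Lemma esum_dominated_fin a b c : (forall l, 0 <= b l) ->
  (forall l, a l <= c * b l) ->
  (\esum_(l in [set: L]) (b l)%:E < +oo)%E ->
  (\esum_(l in [set: L]) (a l)%:E < +oo)%E.
Proof.
move=> b0 ab b_fin; have c_lt := archi_boundP (normr_ge0 c).
apply: le_lt_trans (esum_natmul_fin b (Num.Def.archi_bound `|c|) b0 b_fin).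
apply: le_esum => l _; rewrite lee_fin (le_trans (ab l)) // ler_wpM2r //.
exact: le_trans (ler_norm c) (ltW c_lt).
Qed.

Lemma esum_add_fin a b : (forall l, 0 <= a l) -> (forall l, 0 <= b l) ->
  (\esum_(l in [set: L]) (a l)%:E < +oo)%E ->
  (\esum_(l in [set: L]) (b l)%:E < +oo)%E ->
  (\esum_(l in [set: L]) (a l + b l)%:E < +oo)%E.
Proof.
move=> a0 b0 a_fin b_fin.
rewrite (eq_esum (b := fun l => (a l)%:E + (b l)%:E)); last by move=> l _.
by rewrite esumD ?lte_add_pinfty // => l _; rewrite lee_fin.
Qed.

Lemma l2_dominated a b c : (forall l, a l ^+ 2 <= c * b l ^+ 2) -> l2 b -> l2 a.
Proof. by move=> ab; apply: esum_dominated_fin ab => l; exact: sqr_ge0. Qed.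

Lemma l2_sub a b : l2 a -> l2 b -> l2 (fun l => a l - b l).
Proof.
move=> la lb; apply: (esum_dominated_fin _ (fun l => a l ^+ 2 + b l ^+ 2) 2).
- by move=> l; rewrite addr_ge0 ?sqr_ge0.
- by move=> l; have := sqr_ge0 (a l + b l); nra.
- by apply: esum_add_fin => // l; exact: sqr_ge0.
Qed.

(* Both the positive and the negative part of a b are bounded by a^2 + b^2. *)
Lemma l2_inner_summable a b : l2 a -> l2 b ->
  (\esum_(l in [set: L]) (Num.max (a l * b l) 0)%:E < +oo)%E /\
  (\esum_(l in [set: L]) (Num.max (- (a l * b l)) 0)%:E < +oo)%E.
Proof.
move=> la lb.
have sq_fin : (\esum_(l in [set: L]) (a l ^+ 2 + b l ^+ 2)%:E < +oo)%E.
  by apply: esum_add_fin => // l; exact: sqr_ge0.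
have sq0 l : 0 <= a l ^+ 2 + b l ^+ 2 by rewrite addr_ge0 ?sqr_ge0.
split; apply: (esum_dominated_fin _ _ 1 sq0 _ sq_fin) => l; rewrite mul1r ge_max;
  by have := sqr_ge0 (a l - b l); have := sqr_ge0 (a l + b l); rewrite sq0 andbT; nra.
Qed.

(* The series of b is split into its positive and negative parts as in [l2_inner]. *)
Lemma esum_le_add_signed (F G : L -> \bar R) b :
  (forall l, (0 <= F l)%E) -> (forall l, (0 <= G l)%E) ->
  (\esum_(l in [set: L]) F l < +oo)%E ->
  (\esum_(l in [set: L]) (Num.max (b l) 0)%:E < +oo)%E ->
  (\esum_(l in [set: L]) (Num.max (- b l) 0)%:E < +oo)%E ->
  (forall l, (F l + (b l)%:E <= G l)%E) ->
  (\esum_(l in [set: L]) F l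
   + (fine (\esum_(l in [set: L]) (Num.max (b l) 0)%:E)
      - fine (\esum_(l in [set: L]) (Num.max (- b l) 0)%:E))%:E
   <= \esum_(l in [set: L]) G l)%E.
Proof.
move=> F0 G0 F_fin P_fin N_fin FbG.
have max0 (u : R) : (0 <= (Num.max u 0)%:E)%E by rewrite lee_fin le_max lexx orbT.
have pos_split l : Num.max (b l) 0 = b l + Num.max (- b l) 0.
  by case: (leP 0 (b l)) => hb; [rewrite (max_idPr _) ?addr0 // oppr_le0 |
    rewrite (max_idPl _) ?subrr ?oppr_ge0 // ltW].
have pw l : (F l + (Num.max (b l) 0)%:E <= G l + (Num.max (- b l) 0)%:E)%E.
  by rewrite pos_split EFinD addeA leeD.
have := le_esum (I := [set: L]) (fun l _ => pw l).
rewrite !esumD => [|l _|l _|l _|l _]; rewrite ?max0 ?F0 ?G0 //.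
have sum0 (H : L -> \bar R) : (forall l, 0 <= H l)%E ->
  (0 <= \esum_(l in [set: L]) H l)%E by move=> H0; apply: esum_ge0 => l _.
move: (sum0 _ F0) F_fin (sum0 _ (fun l => max0 (b l))) P_fin.
move: (sum0 _ (fun l => max0 (- b l))) N_fin (sum0 _ G0).
case: (\esum_(l in [set: L]) G l) => [g| |]; rewrite ?leey //.
case: (\esum_(l in [set: L]) (Num.max (- b l) 0)%:E) => [n| |] //.
case: (\esum_(l in [set: L]) (Num.max (b l) 0)%:E) => [p| |] //.
case: (\esum_(l in [set: L]) F l) => [a| |] //= _ _ _ _ _ _ _.
by rewrite -!EFinD !lee_fin; lra.
Qed.

End summable.

Section kappa_regularizer.
Context {R : realType} {L : countType} {phi : R -> R -> R -> R} {kappa : L -> R}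
  {s : R -> L -> R -> \bar R} {alpha : R}.

Lemma in_ran_MPhiP x : (forall l, 0 < kappa l) -> in_ran_MPhi phi alpha kappa x ->
  exists2 z, l2 z & l2 x /\ forall l, kappa l * x l = phi alpha (kappa l) (z l).
Proof.
move=> kappa_gt0 [z [lz [[_ lx] ->]]]; exists z => //; split => // l.
by rewrite /Mplus /Phi mulrC divfK // gt_eqF.
Qed.

Hypotheses (s_family : kappa_reg_family phi kappa s) (alpha_gt0 : 0 < alpha).

Let s_props l : [/\ econvex (s alpha l), s alpha l 0 = 0%E,
  forall x, (s alpha l 0 <= s alpha l x)%E & is_prox (s alpha l) (phi alpha (kappa l))].
Proof. by have [_ ? _ [? ?] ?] := s_family alpha l alpha_gt0. Qed.

Let s_ge0 l x : (0 <= s alpha l x)%E.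
Proof. by have [_ s0 s_ge _] := s_props l; rewrite -s0. Qed.

Variables (z x : L -> R).
Hypotheses (lz : l2 z) (x_prox : forall l, kappa l * x l = phi alpha (kappa l) (z l)).

Lemma kappa_regularizer_ran_fin : (kappa_regularizer kappa s alpha x < +oo)%E.
Proof.
apply: le_lt_trans lz; apply: le_esum => l _; rewrite x_prox.
by have [_ s0 s_ge prox] := s_props l; exact: (prox_value_le_sqr s0 s_ge prox).
Qed.

Lemma kappa_regularizer_ran_subdiff M : l2 x -> (forall l, 0 < kappa l <= M) ->
  in_subdiff (kappa_regularizer kappa s alpha) x
    (fun l => kappa l * (z l - phi alpha (kappa l) (z l))).
Proof.
move=> lx kappa_bnd; set p := fun l => phi alpha (kappa l) (z l).
have lv : l2 (fun l => kappa l * (z l - p l)).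
  apply: (l2_dominated _ z (M ^+ 2)) lz => l; rewrite exprMn.
  have [_ s0 s_ge prox] := s_props l; have /andP[k0 kM] := kappa_bnd l.
  apply: ler_pM; rewrite ?sqr_ge0 ?(prox_residual_le_sqr s0 s_ge prox) //.
  by rewrite ler_pXn2r ?nnegrE ?(ltW k0) ?(le_trans (ltW k0)).
split => // y ly.
have [P_fin N_fin] := l2_inner_summable _ _ lv (l2_sub _ _ ly lx).
have Rx : kappa_regularizer kappa s alpha x = \esum_(l in [set: L]) s alpha l (p l).
  by apply: eq_esum => l _; rewrite x_prox.
rewrite /l2_inner /= Rx; apply: esum_le_add_signed => // [|l].
  by rewrite -Rx; exact: kappa_regularizer_ran_fin.
have [s_conv s0 s_ge prox] := s_props l.
have -> : kappa l * (z l - p l) * (y l - x l) = (z l - p l) * (kappa l * y l - p l).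
  by rewrite /p -x_prox; ring.
exact: prox_subgradient.
Qed.

End kappa_regularizer.

Theorem lemma3p5 (R : realType) (L : countType) (phi : R -> R -> R -> R)
  (kappa : L -> R) (s : R -> L -> R -> \bar R) (alpha : R) :
  nonlinear_reg_filter phi ->
  (forall l, 0 < kappa l) ->
  (exists M : R, forall l, kappa l <= M) ->
  kappa_reg_family phi kappa s ->
  0 < alpha ->
  (forall x, in_ran_MPhi phi alpha kappa x ->
     in_dom (kappa_regularizer kappa s alpha) x) /\
  (forall x, in_ran_MPhi phi alpha kappa x ->
     in_dom_subdiff (kappa_regularizer kappa s alpha) x).
Proof.
move=> _ kappa_gt0 [M kappa_le] s_family alpha_gt0.
have kappa_bnd l : 0 < kappa l <= M by rewrite kappa_gt0 kappa_le.
split=> x /(in_ran_MPhiP _ kappa_gt0) [z lz [lx x_prox]].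
- split => //.
  exact: kappa_regularizer_ran_fin s_family alpha_gt0 _ _ lz x_prox.
- split => //; eexists.
  exact: kappa_regularizer_ran_subdiff s_family alpha_gt0 _ _ lz x_prox _ lx kappa_bnd.
Qed.
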